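(* If $x\in\mathrm{Sort}_n(123,321)$, then $x$ avoids the pattern $123$.
   Context: A permutation contains a pattern $p$ if it has a subsequence order-isomorphic to $p$; otherwise it avoids $p$. For a set $T$ of patterns, the map $s_T$ is defined as follows: the entries of the input permutation are read from left to right, with an initially empty stack. At each step, if the input is nonempty and pushing the next input entry onto the stack produces a stack whose contents, read from top to bottom, avoid every pattern in $T$, that entry is pushed; otherwise the top entry of the stack is popped and appended to the output. When the input is exhausted, the remaining stack entries are popped one at a time to the output. Write $s_{\sigma,\tau}=s_{\{\sigma,\tau\}}$ and $s=s_{\{21\}}$ (West's stack-sorting map). $\mathrm{Sort}_n(\sigma,\tau)$ is the set of $x\in S_n$ with $s(s_{\sigma,\tau}(x))=12\cdots n$. *)

(* Permutations are sequences of naturals; x in S_n means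
   perm_eq x (iota 1 n). Patterns are sequences of distinct naturals. *)
From mathcomp Require Import all_boot.
Set Implicit Arguments. Unset Strict Implicit. Unset Printing Implicit Defensive.

Definition order_iso (s p : seq nat) : bool :=
  (size s == size p) &&
  all (fun i => all (fun j => (nth 0 s i < nth 0 s j) == (nth 0 p i < nth 0 p j))
                    (iota 0 (size p))) (iota 0 (size p)).

Fixpoint subseqs (x : seq nat) : seq (seq nat) :=
  match x with
  | [::] => [:: [::]]
  | a :: x' => let r := subseqs x' in [seq a :: s | s <- r] ++ r
  end.

Definition contains (x p : seq nat) : bool :=
  has (fun s => order_iso s p) (subseqs x).

Definition avoids (x p : seq nat) : bool := ~~ contains x p.

Definition avoids_all (T : seq (seq nat)) (x : seq nat) : bool :=
  all (avoids x) T.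

(* One run of the stack map s_T.  [st] is the stack read from top to bottom
   (head = top).  [out] is the output so far.  Each entry is pushed once and
   popped once, so fuel 2*|input|+1 suffices.  (If the push is forbidden
   while the stack is empty -- impossible for patterns of length >= 2 -- the
   entry is pushed anyway; this case never arises for the sets used here.) *)
Fixpoint stack_run (T : seq (seq nat)) (fuel : nat) (inp st out : seq nat)
  : seq nat :=
  match fuel with
  | 0 => out ++ st
  | f.+1 =>
    match inp with
    | [::] => out ++ st
    | a :: inp' =>
      if avoids_all T (a :: st) then stack_run T f inp' (a :: st) out
      else match st with
           | [::] => stack_run T f inp' [:: a] out
           | b :: st' => stack_run T f inp st' (rcons out b)
           end
    end
  end.

Definition stack_map (T : seq (seq nat)) (x : seq nat) : seq nat :=
  stack_run T (size x).*2.+1 x [::] [::].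

Definition s2 (sigma tau : seq nat) := stack_map [:: sigma; tau].

Definition west (x : seq nat) := stack_map [:: [:: 2; 1]] x.

Definition Sort (n : nat) (sigma tau : seq nat) (x : seq nat) : Prop :=
  perm_eq x (iota 1 n) /\ west (s2 sigma tau x) = iota 1 n.

Example west_ex : west [:: 2; 3; 1] = [:: 2; 1; 3]. Proof. vm_compute. reflexivity. Qed.
Example west_ex2 : west [:: 3; 1; 2] = [:: 1; 2; 3]. Proof. vm_compute. reflexivity. Qed.
Example s2_ex : s2 [:: 1;2;3] [:: 3;2;1] [:: 1;2;3] = [:: 2;3;1]. Proof. vm_compute. reflexivity. Qed.
Example avoid_ex : avoids [:: 2; 3; 1] [:: 1;2;3]. Proof. vm_compute. reflexivity. Qed.
Example contains_ex : contains [:: 1; 3; 2] [:: 2; 1]. Proof. vm_compute. reflexivity. Qed.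

From mathcomp Require Import all_boot zify.
Set Implicit Arguments. Unset Strict Implicit. Unset Printing Implicit Defensive.

(* Suppose x contains 123. Let c end the shortest prefix of x containing 123,
   and pick an occurrence a b c of 123 in which every entry between a and b
   exceeds a. As the entries before c avoid 123, the s_{123,321} stack never
   pops a before b is pushed, and every entry between b and c is smaller than c.
   From the push of b until the push of c the machine keeps one of: a descent
   of entries below c in the stack, an output entry q < c above some stack entry
   p < q, or an output entry between the waiting input entry and c. When c is
   pushed only the second is possible (the first would create 321 in the stack),
   so q precedes c and c precedes p in the output: it contains the 231
   occurrence q c p. West's map s keeps q before p whenever q r p occurs with
   q < r, so it cannot sort that output. *)

Lemma subseq_cons_inv (T : eqType) (u d : T) s st :
  subseq (u :: s) (d :: st) -> u = d /\ subseq s st \/ subseq (u :: s) st.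
Proof. by rewrite /=; case: eqP => [->|_]; [left|right]. Qed.

Lemma subseq_take_nth (T : eqType) (x0 : T) t s j :
  j < size s -> subseq t (take j s) -> subseq (rcons t (nth x0 s j)) (take j.+1 s).
Proof. by move=> js tj; rewrite (take_nth x0 js) -!cats1 (cat_subseq tj (subseq_refl _)). Qed.

Lemma subseq_take_leq (T : eqType) (s : seq T) m n : m <= n -> subseq (take m s) (take n s).
Proof. by move=> mn; rewrite -(take_takel s mn) take_subseq. Qed.

Lemma subseq_rcons_take (T : eqType) (x0 : T) t s v n :
  subseq (rcons t v) (take n s) ->
  exists j, [/\ j < n, j < size s, nth x0 s j = v & subseq t (take j s)].
Proof.
elim: s n t => [|y s IH] [|n] t; try by case: t.
rewrite /= -/(rcons _ _); case: t => [|z t] /=; case: eqP => [<- | _] sub.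
- by exists 0.
- by have [j [jn js <- _]] := IH n [::] sub; exists j.+1.
- have [j [jn js <- tj]] := IH n t sub; exists j.+1; split => //=.
  by rewrite eqxx.
- have [j [jn js <- tj]] := IH n (z :: t) sub; exists j.+1; split => //=.
  by case: eqP => [_ | _]; [apply: cons_subseq tj | exact: tj].
Qed.

Lemma drop_eq_cons (T : Type) (x0 : T) s r y t :
  drop r s = y :: t -> [/\ r < size s, nth x0 s r = y & t = drop r.+1 s].
Proof.
move=> drs; have rs : r < size s by rewrite ltnNge; apply/negP => /drop_oversize; rewrite drs.
by move: drs; rewrite (drop_nth x0 rs) => -[-> ->].
Qed.

Lemma mem_subseqs s x : (s \in subseqs x) = subseq s x.
Proof.
elim: x s => [|a x IH] [|b s] //=; rewrite mem_cat IH ?sub0seq ?orbT //.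
have [->|neq] := eqVneq b a.
  rewrite mem_map; last by move=> ? ? [].
  by rewrite IH orb_idr // => /cons_subseq.
by rewrite orb_idl // => /mapP [t _ [/eqP]]; rewrite (negPf neq).
Qed.

Lemma containsP x p : reflect (exists2 s, subseq s x & order_iso s p) (contains x p).
Proof. by apply: (iffP hasP) => -[s sx iso]; exists s; rewrite ?mem_subseqs in sx *. Qed.

Lemma contains_subseq x y p : subseq x y -> contains x p -> contains y p.
Proof.
move=> xy /containsP [s sx iso]; apply/containsP; exists s => //.
exact: subseq_trans xy.
Qed.

Lemma contains3P (P : nat -> nat -> nat -> bool) x p :
  size p = 3 -> (forall u v w, order_iso [:: u; v; w] p = P u v w) ->
  reflect (exists u v w, subseq [:: u; v; w] x /\ P u v w) (contains x p).
Proof.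
move=> sz isoP; apply: (iffP (containsP x p)) => [[s sx iso]|[u [v [w [sx Puvw]]]]].
  have [u [v [w s_uvw]]] : exists u v w, s = [:: u; v; w].
    move: iso => /andP [/eqP]; rewrite sz.
    by case: s {sx} => [|u [|v [|w [|]]]] // _ _; exists u, v, w.
  by exists u, v, w; rewrite -isoP -s_uvw.
by exists [:: u; v; w]; rewrite ?isoP.
Qed.

Lemma contains_123P x :
  reflect (exists u v w, subseq [:: u; v; w] x /\ u < v < w) (contains x [:: 1; 2; 3]).
Proof.
apply: contains3P => // u v w; rewrite /order_iso /= !ltnn !eqxx /=.
by case: (ltngtP u v); case: (ltngtP v w); case: (ltngtP u w) => //=; lia.
Qed.

Lemma contains_321P x :
  reflect (exists u v w, subseq [:: u; v; w] x /\ w < v < u) (contains x [:: 3; 2; 1]).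
Proof.
apply: contains3P => // u v w; rewrite /order_iso /= !ltnn !eqxx /=.
by case: (ltngtP u v); case: (ltngtP v w); case: (ltngtP u w) => //=; lia.
Qed.

Lemma contains_21 x u v : subseq [:: u; v] x -> v < u -> contains x [:: 2; 1].
Proof.
move=> sx vu; apply/containsP; exists [:: u; v] => //.
by rewrite /order_iso /= !ltnn vu ltnNge ltnW.
Qed.

Section StackRun.
Variables (T : seq (seq nat)) (P : seq nat -> seq nat -> seq nat -> Prop).
Hypothesis P_push : forall a inp st out,
  P (a :: inp) st out -> avoids_all T (a :: st) \/ st = [::] -> P inp (a :: st) out.
Hypothesis P_pop : forall a inp b st out,
  P (a :: inp) (b :: st) out -> ~~ avoids_all T (a :: b :: st) ->
  P (a :: inp) st (rcons out b).

Lemma stack_run_ind f inp st out :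
  (size inp).*2 + size st < f -> P inp st out ->
  exists st' out', P [::] st' out' /\ stack_run T f inp st out = out' ++ st'.
Proof.
elim: f inp st out => [|f IH] [|a inp] st out //= fuel Pst; try by exists st, out.
case: ifP => [pushable|blocked].
  by apply: IH; [move: fuel => /=; rewrite doubleS; lia | apply: P_push Pst _; left].
case: st fuel Pst blocked => [|b st] fuel Pst blocked.
  by apply: IH; [move: fuel => /=; rewrite doubleS; lia | apply: P_push Pst _; right].
by apply: IH; [move: fuel => /=; lia | apply: P_pop Pst _; rewrite blocked].
Qed.

Lemma stack_map_ind x :
  P x [::] [::] -> exists st out, P [::] st out /\ stack_map T x = out ++ st.
Proof. by apply: stack_run_ind; rewrite addn0. Qed.

End StackRun.

Lemma subseq_west q r p y :
  q < r -> subseq [:: q; r; p] y -> subseq [:: q; p] (west y).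
Proof.
move=> qr qrp_y.
(* Pops leave [out ++ st] unchanged and pushes only insert into it. *)
pose P (inp st out : seq nat) :=
  [\/ subseq [:: q; r; p] inp, q \in out ++ st /\ subseq [:: r; p] inp,
      q \in out /\ p \in inp | subseq [:: q; p] (out ++ st)].
have [st [out [Pend ->]]] : exists st out, P [::] st out /\ west y = out ++ st.
- apply: stack_map_ind; last exact: Or41.
  + move=> a inp st out Pa pushable; rewrite /P /=.
    case: Pa => [/= | [q_in /=] | [q_out] | qp].
    * by case: eqP => [<- rp | _ qrp]; [apply: Or42; rewrite mem_cat mem_head orbT | apply: Or41].
    * case: eqP => [ar pinp | _ rp]; last first.
        by apply: Or42; split=> //; move: q_in; rewrite !mem_cat inE => /orP [] ->; rewrite ?orbT.
      apply: Or43; split; last by rewrite -sub1seq.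
      move: q_in; rewrite mem_cat => /orP [// | q_st]; exfalso.
      case: pushable => [| st0]; last by rewrite st0 in q_st.
      rewrite /avoids_all /= andbT /avoids -ar => /negP; apply.
      by apply: (contains_21 _ qr); rewrite /= eqxx sub1seq.
    * rewrite inE => /orP [/eqP <- | pinp]; last by apply: Or43.
      by apply: Or44; apply: (@cat_subseq _ [:: q] [:: p]); rewrite sub1seq ?mem_head.
    * apply: Or44; apply: subseq_trans qp _.
      by rewrite -[out ++ a :: st]cat_rcons cat_subseq // subseq_rcons.
  + move=> a inp b st out Pa _; rewrite /P cat_rcons.
    case: Pa => [? | ? | [q_out ?] | ?]; [exact: Or41 | exact: Or42 | apply: Or43 | exact: Or44].
    by rewrite mem_rcons inE q_out orbT.
by case: Pend => [// | [_ //] | [_ //] | //].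
Qed.

Lemma west_iota_no_231 n y q r p :
  west y = iota 1 n -> subseq [:: q; r; p] y -> p < q < r -> False.
Proof.
move=> wy qrp_y /andP [pq qr]; have := subseq_west qr qrp_y; rewrite wy.
move/(subseq_sorted ltn_trans)/(_ (iota_ltn_sorted 1 n)) => /=.
by rewrite andbT ltnNge ltnW.
Qed.

Lemma avoids_all_subseq T s t : subseq s t -> avoids_all T t -> avoids_all T s.
Proof. by move=> st /allP avt; apply/allP => p /avt; apply: contra; apply: contains_subseq. Qed.

Local Notation T123_321 := [:: [:: 1; 2; 3]; [:: 3; 2; 1]].

Lemma avoids_123_321E s :
  avoids_all T123_321 s = ~~ contains s [:: 1; 2; 3] && ~~ contains s [:: 3; 2; 1].
Proof. by rewrite /avoids_all /= andbT. Qed.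

Lemma stack_no123 s u v w :
  avoids_all T123_321 s -> subseq [:: u; v; w] s -> u < v < w -> False.
Proof.
rewrite avoids_123_321E => /andP [/negP no123 _] uvw_s uvw.
by apply: no123; apply/contains_123P; exists u, v, w.
Qed.

Lemma stack_no321 s u v w :
  avoids_all T123_321 s -> subseq [:: u; v; w] s -> w < v < u -> False.
Proof.
rewrite avoids_123_321E => /andP [_ /negP no321] uvw_s wvu.
by apply: no321; apply/contains_321P; exists u, v, w.
Qed.

Lemma push_blocked d st :
  avoids_all T123_321 st -> ~~ avoids_all T123_321 (d :: st) ->
  exists u w, subseq [:: u; w] st /\ (d < u < w \/ w < u < d).
Proof.
move=> av_st; rewrite avoids_123_321E negb_and !negbK.
case/orP => [/contains_123P | /contains_321P] [t [u [w [/subseq_cons_inv sub ord]]]].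
- case: sub ord => [[-> uw_st] ord | tuw_st ord]; first by exists u, w; split => //; left.
  by case: (stack_no123 av_st tuw_st ord).
- case: sub ord => [[-> uw_st] ord | tuw_st ord]; first by exists u, w; split => //; right.
  by case: (stack_no321 av_st tuw_st ord).
Qed.

Definition desc_below (c : nat) (st : seq nat) :=
  exists u w, subseq [:: u; w] st /\ w < u < c.

Definition split_below (c : nat) (st out : seq nat) :=
  exists q p, [/\ q \in out, p \in st & p < q < c].

(* The last alternative turns into [split_below] once [d] is pushed. *)
Definition pending_inv (c d : nat) (st out : seq nat) :=
  [\/ desc_below c st, split_below c st out | exists2 t, t \in out & d < t < c].

Lemma pending_inv_pop c d e st out :
  d <= c -> avoids_all T123_321 (e :: st) -> ~~ avoids_all T123_321 (d :: e :: st) ->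
  pending_inv c d (e :: st) out -> pending_inv c d st (rcons out e).
Proof.
move=> dc av_st blocked inv.
have e_out : e \in rcons out e by rewrite mem_rcons mem_head.
have out_sub t : t \in out -> t \in rcons out e.
  by rewrite mem_rcons inE => ->; rewrite orbT.
case: inv => [[u [w [/subseq_cons_inv [[-> w_st] | uw_st] wuc]]] | [q [p [q_out]]] |
              [t t_out dtc]].
- by apply: Or32; exists e, w; split; rewrite // -sub1seq.
- by apply: Or31; exists u, w.
- rewrite inE => /orP [/eqP -> | p_st] pqc; last by apply: Or32; exists q, p; rewrite out_sub.
  (* The popped [e] was the witness [p]: the pattern blocking [d] replaces it. *)
  have [u [w [/subseq_cons_inv [[-> w_st] | uw_st] [duw | wud]]]] := push_blocked av_st blocked.
  + by apply: Or33; exists e => //; lia.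
  + by apply: Or32; exists e, w; split; rewrite // -?sub1seq; lia.
  + case: (ltnP d q) => [dq | qd]; first by apply: Or33; exists q; rewrite ?out_sub ?dq; lia.
    by case: (stack_no123 av_st (u := e) (v := u) (w := w)); rewrite /= ?eqxx //; lia.
  + by apply: Or31; exists u, w; split => //; lia.
- by apply: Or33; exists t; rewrite ?out_sub.
Qed.

Lemma pending_inv_push c d d' st out :
  pending_inv c d st out -> pending_inv c d' (d :: st) out.
Proof.
case=> [[u [w [uw_st wuc]]] | [q [p [q_out p_st pqc]]] | [t t_out dtc]].
- by apply: Or31; exists u, w; split => //; apply: subseq_trans uw_st (subseq_cons _ _).
- by apply: Or32; exists q, p; rewrite inE p_st orbT.
- by apply: Or32; exists t, d; rewrite mem_head.
Qed.

Lemma pending_inv_push_top c st out :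
  avoids_all T123_321 (c :: st) -> pending_inv c c st out -> split_below c st out.
Proof.
move=> av_st; case=> [[u [w [uw_st wuc]]] | // | [t _]]; last by lia.
by case: (stack_no321 av_st (u := c) (v := u) (w := w)); rewrite /= ?eqxx.
Qed.

Lemma pop_keeps_below a d e st :
  a \in e :: st -> a < d -> avoids_all T123_321 (e :: st) ->
  ~~ avoids_all T123_321 (d :: e :: st) ->
  ~~ contains (rcons (rev (e :: st)) d) [:: 1; 2; 3] -> a \in st.
Proof.
rewrite inE => /orP [/eqP -> {a} ed av_st blocked no123 | //]; exfalso.
have no_incr u w : subseq [:: w; u] (rev (e :: st)) -> w < u < d -> False.
  move=> wu_st wud; move/negP: no123; apply; apply/contains_123P; exists w, u, d.
  by rewrite -cats1 (cat_subseq wu_st) ?sub1seq ?mem_head.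
have [u [w [/subseq_cons_inv [[-> w_st] | uw_st] [duw | wud]]]] := push_blocked av_st blocked.
- by lia.
- apply: (no_incr e w) => //; rewrite rev_cons -cats1.
  by apply: (@cat_subseq _ [:: w] [:: e]); rewrite ?subseq_refl // sub1seq mem_rev -sub1seq.
- by apply: (stack_no123 av_st (u := e) (v := u) (w := w)); rewrite /= ?eqxx //; lia.
- apply: (no_incr u w) => //; rewrite rev_cons.
  by apply: subseq_trans (subseq_rcons _ _); rewrite -[[:: w; u]]/(rev [:: u; w]) subseq_rev.
Qed.

Section Sort123_321.
Variables (x : seq nat) (ia jb k : nat).
Local Notation a := (nth 0 x ia).
Local Notation b := (nth 0 x jb).
Local Notation c := (nth 0 x k).
Hypotheses (ia_jb : ia < jb) (jb_k : jb < k) (k_size : k < size x).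
Hypothesis above_a : forall r, ia < r <= jb -> a < nth 0 x r.
Hypothesis b_c : b < c.
Hypothesis prefix_avoids : ~~ contains (take k x) [:: 1; 2; 3].

Lemma below_c r : jb < r < k -> nth 0 x r < c.
Proof.
move=> /andP [jb_r r_k]; rewrite ltnNge; apply/negP => c_r.
have a_b : a < b by rewrite above_a // ia_jb leqnn.
move/negP: prefix_avoids; apply; apply/contains_123P; exists a, b, (nth 0 x r).
split; last by rewrite a_b (leq_trans b_c c_r).
have lt_size i : i < k -> i < size x by move/ltn_trans; apply.
have ab_x : subseq [:: a; b] (take jb.+1 x).
  apply: (@subseq_take_nth _ 0 [:: a] _ _ (lt_size _ jb_k)).
  apply: subseq_trans (subseq_take_leq x ia_jb).
  exact: (@subseq_take_nth _ 0 [::] _ _ (lt_size _ (ltn_trans ia_jb jb_k)) (sub0seq _)).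
apply: subseq_trans (subseq_take_leq x r_k).
apply: (@subseq_take_nth _ 0 [:: a; b] _ _ (lt_size _ r_k)).
exact: subseq_trans ab_x (subseq_take_leq x jb_r).
Qed.

Definition run_phase r st out :=
  [/\ ia < r <= jb -> a \in st,
      jb < r <= k -> pending_inv c (nth 0 x r) st out
    & k < r -> exists q p, p < q < c /\ subseq [:: q; c; p] (out ++ st)].

Definition run_inv inp st out := exists r,
  [/\ inp = drop r x, avoids_all T123_321 st, subseq (rev st) (take r x) & run_phase r st out].

Lemma run_inv_push d inp st out :
  run_inv (d :: inp) st out -> avoids_all T123_321 (d :: st) \/ st = [::] ->
  run_inv inp (d :: st) out.
Proof.
move=> [r [/esym/(drop_eq_cons 0) [r_size <- ->] av_st st_r [ph_a ph_inv ph_fin]]] pushable.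
have av_dst : avoids_all T123_321 (nth 0 x r :: st) by case: pushable => [// | ->].
exists r.+1; split => //; first by rewrite rev_cons subseq_take_nth.
split => [/andP [ia_r r_jb] | /andP [jb_r r_k] | k_r].
- have [-> | ne] := eqVneq r ia; first by rewrite mem_head.
  by rewrite inE ph_a ?orbT //; lia.
- have [r_jb | ne] := eqVneq r jb; last by apply: pending_inv_push; apply: ph_inv; lia.
  subst r; apply: Or31; exists b, a; rewrite b_c above_a ?ia_jb ?leqnn //= eqxx sub1seq.
  by split => //; apply: ph_a; rewrite ia_jb leqnn.
- have [r_k | ne] := eqVneq r k.
    subst r; have [|q [p [q_out p_st pqc]]] := pending_inv_push_top av_dst (ph_inv _).
      by rewrite jb_k leqnn.
    exists q, p; split => //; apply: (@cat_subseq _ [:: q] [:: c; p]); first by rewrite sub1seq.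
    by rewrite /= eqxx sub1seq.
  have [|q [p [pqc sub]]] := ph_fin; first lia.
  exists q, p; split => //.
  by apply: subseq_trans sub _; rewrite subseq_cat2l subseq_cons.
Qed.

Lemma run_inv_pop d inp e st out :
  run_inv (d :: inp) (e :: st) out -> ~~ avoids_all T123_321 (d :: e :: st) ->
  run_inv (d :: inp) st (rcons out e).
Proof.
move=> [r [dr av_st st_r [ph_a ph_inv ph_fin]]].
have [r_size d_r _] := drop_eq_cons 0 (esym dr); subst d => blocked.
exists r; split => //.
- exact: avoids_all_subseq (subseq_cons _ _) av_st.
- by apply: subseq_trans st_r; rewrite rev_cons subseq_rcons.
split => [r_ab | r_bc | k_r]; last by rewrite cat_rcons; apply: ph_fin.
- apply: pop_keeps_below (ph_a r_ab) _ av_st blocked _; first exact: above_a.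
  apply: contraNN prefix_avoids; apply: contains_subseq.
  apply: subseq_trans (subseq_take_leq x (_ : r.+1 <= k)); last lia.
  exact: subseq_take_nth.
- apply: pending_inv_pop _ av_st blocked (ph_inv r_bc).
  have [-> // | ne] := eqVneq r k; apply: ltnW; apply: below_c; lia.
Qed.

Lemma s2_contains_231 :
  exists q p, p < q < c /\ subseq [:: q; c; p] (s2 [:: 1; 2; 3] [:: 3; 2; 1] x).
Proof.
rewrite /s2; have [|st [out [[r [drx _ _ [_ _ ph_fin]]] ->]]] :=
  stack_map_ind run_inv_push run_inv_pop (x := x).
  by exists 0; split; rewrite ?drop0 ?sub0seq //; split => ?; lia.
apply: ph_fin; move/(congr1 size): drx; rewrite size_drop /=; lia.
Qed.

End Sort123_321.

Lemma contains_123_first x :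
  contains x [:: 1; 2; 3] ->
  exists ia jb k, [/\ ia < jb < k, k < size x,
    (forall r, ia < r <= jb -> nth 0 x ia < nth 0 x r),
    nth 0 x jb < nth 0 x k & ~~ contains (take k x) [:: 1; 2; 3]].
Proof.
move=> x123; have ex_m : exists m, contains (take m x) [:: 1; 2; 3].
  by exists (size x); rewrite take_size.
case: (ex_minnP ex_m) => m m123 m_min.
have [k mk] : exists k, m = k.+1 by case: m m123 {m_min} => [|k]; [rewrite take0 | exists k].
subst m; have no123 : ~~ contains (take k x) [:: 1; 2; 3].
  by apply/negP => /m_min; rewrite ltnn.
case/contains_123P: m123 => u [v [w [uvw /andP [u_v v_w]]]].
have [k' [k'k k'x w_k' uv_k']] := @subseq_rcons_take _ 0 [:: u; v] _ _ _ uvw.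
have k'_eq : k' = k.
  apply/eqP; rewrite eqn_leq -ltnS k'k leqNgt; apply/negP => k'_k.
  move/negP: no123; apply; apply/contains_123P; exists u, v, w; split; last by rewrite u_v.
  by apply: subseq_trans (subseq_take_leq x k'_k); rewrite -w_k' (@subseq_take_nth _ 0 [:: u; v]).
subst k'; have [jb [jb_k _ v_jb u_jb]] := @subseq_rcons_take _ 0 [:: u] _ _ _ uv_k'.
have [i0 [i0_jb _ u_i0 _]] := @subseq_rcons_take _ 0 [::] _ _ _ u_jb.
pose below_b i := (i < jb) && (nth 0 x i < v).
have ex_i : exists i, below_b i by exists i0; rewrite /below_b i0_jb u_i0.
have [|ia /andP [ia_jb ia_v] ia_max] := ex_maxnP ex_i (m := jb).
  by move=> i /andP [/ltnW].
exists ia, jb, k; split; rewrite ?ia_jb ?v_jb ?w_k' //.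
move=> r /andP [ia_r r_jb]; rewrite leq_eqVlt in r_jb.
case/orP: r_jb => [/eqP -> | r_jb]; first by rewrite v_jb.
rewrite (leq_trans ia_v) // leqNgt; apply/negP => r_v.
by have := ia_max r; rewrite /below_b r_jb r_v leqNgt ia_r => /(_ isT).
Qed.

Theorem proposition4p1 (n : nat) (x : seq nat) :
  Sort n [:: 1; 2; 3] [:: 3; 2; 1] x -> avoids x [:: 1; 2; 3].
Proof.
case=> _ west_s2_x; apply/negP => /contains_123_first.
case=> ia [jb [k [/andP [ia_jb jb_k] k_size above_a b_c prefix_avoids]]].
have [q [p [pqc qcp]]] := s2_contains_231 ia_jb jb_k k_size above_a b_c prefix_avoids.
exact: west_iota_no_231 west_s2_x qcp pqc.
Qed.
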